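(* Let $k\le l$ be positive integers with $\gcd(k,l)=1$, let $n\ge1$, $m\ge 0$ be integers, write $m=qn+r$ with integers $q\ge 0$, $0\le r<n$, and let $A=(a_{ij})\in\mathcal D^{k,l}(m,n)$. Let $I$ be a set of rows and $J$ a set of columns of $A$ such that $a_{ij}\le q$ for all $i\in I$, $j\in J$, and such that $|I|+|J|$ is as large as possible among all such pairs. Put $t_1=nk-|I|$ and $t_2=nl-|J|$. Then $$qt_1t_2+r(t_1l+t_2k)\ge klnr.$$
   Context: $\mathcal D^{k,l}(m,n)$ denotes the set of all $nk\times nl$ matrices with nonnegative integer entries all of whose row sums equal $ml$ and all of whose column sums equal $mk$. *)

From mathcomp Require Import all_boot all_algebra.
Unset Printing Implicit Defensive.

Definition in_D (k l m n : nat) (A : 'M[nat]_(n * k, n * l)) : Prop :=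
  (forall i : 'I_(n * k), \sum_(j < n * l) A i j = m * l) /\
  (forall j : 'I_(n * l), \sum_(i < n * k) A i j = m * k).

Definition small_block (a b : nat) (A : 'M[nat]_(a, b)) (q : nat)
  (I : {set 'I_a}) (J : {set 'I_b}) : Prop :=
  forall i j, i \in I -> j \in J -> A i j <= q.

From mathcomp Require Import all_boot all_algebra.
From mathcomp Require Import ring.
Import GRing.Theory.

(* Double counting.  The rows of [I] and the columns of [J] together cover
   every entry at most once, except those of the block [I x J], which are
   counted twice and are each at most [q].  With constant line sums this gives
   [|I| m l + |J| m k <= n k m l + q |I| |J|], and substituting
   [|I| = n k - t1], [|J| = n l - t2], [m = q n + r] turns it into the claim. *)

Section LineSums.

Variables (a b : nat) (A : 'M[nat]_(a, b)).

Lemma sum_rows_cols_le (I : {set 'I_a}) (J : {set 'I_b}) :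
  \sum_(i in I) \sum_j A i j + \sum_(j in J) \sum_i A i j <=
  \sum_i \sum_j A i j + \sum_(i in I) \sum_(j in J) A i j.
Proof.
rewrite [X in _ + X]exchange_big /= [X in _ + X](bigID (mem I)) /=.
rewrite [X in _ <= X + _](bigID (mem I)) /=.
rewrite -addnA leq_add2l [X in _ <= X]addnC leq_add2l leq_sum // => i _.
by rewrite [X in _ <= X](bigID (mem J)) leq_addr.
Qed.

Lemma small_block_sum_le q (I : {set 'I_a}) (J : {set 'I_b}) :
  small_block a b A q I J ->
  \sum_(i in I) \sum_(j in J) A i j <= #|I| * #|J| * q.
Proof.
move=> smallIJ; rewrite -mulnA -sum_nat_const leq_sum // => i iI.
by rewrite -sum_nat_const leq_sum // => j jJ; apply: smallIJ.
Qed.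

Lemma const_line_sums_small_block_le R C q (I : {set 'I_a}) (J : {set 'I_b}) :
  (forall i, \sum_j A i j = R) -> (forall j, \sum_i A i j = C) ->
  small_block a b A q I J ->
  #|I| * R + #|J| * C <= a * R + #|I| * #|J| * q.
Proof.
move=> rowR colC smallIJ.
have rowsI : \sum_(i in I) \sum_j A i j = #|I| * R.
  by rewrite (eq_bigr (fun=> R)) ?sum_nat_const.
have colsJ : \sum_(j in J) \sum_i A i j = #|J| * C.
  by rewrite (eq_bigr (fun=> C)) ?sum_nat_const.
have total : \sum_i \sum_j A i j = a * R.
  by rewrite (eq_bigr (fun=> R)) // sum_nat_const card_ord.
rewrite -rowsI -colsJ -total.
apply: leq_trans (sum_rows_cols_le I J) _.
by rewrite leq_add2l small_block_sum_le.
Qed.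

End LineSums.

Lemma leq_klnr_of_double_count k l n q r x y t1 t2 :
  x + t1 = n * k -> y + t2 = n * l ->
  x * ((q * n + r) * l) + y * ((q * n + r) * k) <=
    n * k * ((q * n + r) * l) + x * y * q ->
  k * l * n * r <= q * t1 * t2 + r * (t1 * l + t2 * k).
Proof.
move=> def_nk def_nl ineq.
suff identity : k * l * n * r + (n * k * ((q * n + r) * l) + x * y * q) =
    q * t1 * t2 + r * (t1 * l + t2 * k) + (x * ((q * n + r) * l) + y * ((q * n + r) * k)).
  by rewrite -(leq_add2r (n * k * ((q * n + r) * l) + x * y * q)) identity leq_add2l.
apply/eqP; rewrite -eqz_nat; apply/eqP.
have def_x : Posz x = (n%:Z * k%:Z - t1%:Z)%R by rewrite -PoszM -def_nk PoszD addrK.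
have def_y : Posz y = (n%:Z * l%:Z - t2%:Z)%R by rewrite -PoszM -def_nl PoszD addrK.
by rewrite !(PoszD, PoszM) def_x def_y; ring.
Qed.

Theorem lemma2p3 (k l n m : nat) (A : 'M[nat]_(n * k, n * l))
  (I : {set 'I_(n * k)}) (J : {set 'I_(n * l)}) :
  0 < k -> k <= l -> gcdn k l = 1 -> 0 < n ->
  in_D k l m n A ->
  small_block _ _ A (m %/ n) I J ->
  (forall (I' : {set 'I_(n * k)}) (J' : {set 'I_(n * l)}),
      small_block _ _ A (m %/ n) I' J' -> #|I'| + #|J'| <= #|I| + #|J|) ->
  let q := m %/ n in let r := m %% n in
  let t1 := n * k - #|I| in let t2 := n * l - #|J| in
  k * l * n * r <= q * t1 * t2 + r * (t1 * l + t2 * k).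
Proof.
move=> _ _ _ _ [rowsum colsum] smallIJ _; cbv zeta.
have cardI : #|I| <= n * k by rewrite -[X in _ <= X]card_ord max_card.
have cardJ : #|J| <= n * l by rewrite -[X in _ <= X]card_ord max_card.
apply: (@leq_klnr_of_double_count k l n _ _ #|I| #|J|); rewrite ?subnKC //.
by rewrite -divn_eq; exact: const_line_sums_small_block_le.
Qed.
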